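(* Let $\lambda>0$, $\lambda_{max}>0$, $p\in(0,1)$, let $B\ge1$ be an integer, and let $f_B:[0,1]\to\mathbb{R}$ be as defined in the context. For $q,\tilde q\in[0,1]$ let $\mathrm{TH}_B(q,\tilde q)=f_B(q)\exp\!\big(-\frac{\lambda f_B(\tilde q)}{\lambda_{max}}\big)$, and call $q^*\in[0,1]$ a symmetric Nash equilibrium (SNE) if $\mathrm{TH}_B(q^*,q^* )=\max_{q\in[0,1]}\mathrm{TH}_B(q,q^* )$. Then $q^*=1$ is an SNE. At any SNE $q^*$, $\mathrm{TH}_B(q^*,q^* )=p\exp\!\big(-\frac{p\lambda}{\lambda_{max}}\big)$ and the transmission capacity $C=\lambda\,\mathrm{TH}_B(q^*,q^* )$ equals $\lambda p\exp\!\big(-\frac{p\lambda}{\lambda_{max}}\big)$.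
   Context: For $q\in(0,1]$ define $r_B(q)$ by: if $B=1$, $r_1(q)=\frac{p}{p+q-pq}$; if $B>1$ and $q\ne p$, $r_B(q)=\frac{\frac{p}{q}(1-\rho^B)}{1-\frac{p}{q}\rho^B}$ with $\rho=\frac{p(1-q)}{q(1-p)}$; if $B>1$ and $q=p$, $r_B(p)=\frac{B}{B+1-p}$. Set $f_B(q)=q\,r_B(q)$ for $q\in(0,1]$ and $f_B(0)=0$. Interpretation: transmitters form a homogeneous Poisson point process of density $\lambda$ in $\mathbb{R}^2$, harvest one energy unit per slot with probability $p$ into a battery of capacity $B$, and transmit with their own ALOHA probability when the battery is nonempty; $\mathrm{TH}_B(q,\tilde q)$ is the throughput of a transmitter using $q$ when all others use $\tilde q$; $\lambda_{max}=\frac{1}{d^2\theta^{2/\alpha}\kappa(\alpha)}$, $\kappa(\alpha)=\frac{2\pi^2}{\alpha\sin(2\pi/\alpha)}$. *)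

From Stdlib Require Import Reals.
Open Scope R_scope.

Definition rho (p q : R) : R := p * (1 - q) / (q * (1 - p)).

Definition r_B (p : R) (B : nat) (q : R) : R :=
  if Nat.eqb B 1 then p / (p + q - p * q)
  else if Req_EM_T q p then INR B / (INR B + 1 - p)
  else (p / q) * (1 - rho p q ^ B) / (1 - (p / q) * rho p q ^ B).

Definition f_B (p : R) (B : nat) (q : R) : R :=
  if Req_EM_T q 0 then 0 else q * r_B p B q.

Definition TH (lam lam_max p : R) (B : nat) (q qt : R) : R :=
  f_B p B q * exp (- (lam * f_B p B qt / lam_max)).

Definition SNE (lam lam_max p : R) (B : nat) (qs : R) : Prop :=
  0 <= qs <= 1 /\
  forall q, 0 <= q <= 1 -> TH lam lam_max p B q qs <= TH lam lam_max p B qs qs.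

(* Whatever the battery size, a transmitter can never send more often than it harvests:
   f_B(q) <= p on [0,1], with equality at q = 1 (where rho = 0).  Hence q = 1 maximises
   TH_B(., q~) for every q~, so it is an SNE; conversely, comparing an SNE [qs] with the
   deviation q = 1 forces f_B(qs) >= p, hence f_B(qs) = p, which fixes TH_B(qs, qs). *)

From Stdlib Require Import Reals Lra Lia Psatz.
Open Scope R_scope.

Lemma Rdiv_le_1_pos (n d : R) : 0 < d -> n <= d -> n / d <= 1.
Proof.
  intros Hd Hnd.
  apply (Rmult_le_reg_r d); [exact Hd|].
  unfold Rdiv; rewrite Rmult_assoc, Rinv_l, Rmult_1_r, Rmult_1_l by lra.
  exact Hnd.
Qed.

Lemma Rdiv_le_1_neg (n d : R) : d < 0 -> d <= n -> n / d <= 1.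
Proof.
  intros Hd Hnd.
  replace (n / d) with (- n / - d) by (field; lra).
  apply Rdiv_le_1_pos; lra.
Qed.

Lemma Rmult_le_1_r (p t : R) : 0 <= p -> t <= 1 -> p * t <= p.
Proof.
  intros Hp Ht.
  rewrite <- (Rmult_1_r p) at 2.
  now apply Rmult_le_compat_l.
Qed.

Section Rho.

Variables p q : R.
Hypothesis Hp : 0 < p < 1.
Hypothesis Hq : 0 < q <= 1.

Lemma rho_ge_0 : 0 <= rho p q.
Proof.
  unfold rho, Rdiv.
  apply Rmult_le_pos; [nra|].
  left; apply Rinv_0_lt_compat; nra.
Qed.

(* Hence [rho] lies on the same side of 1 as [p] does of [q]. *)
Lemma rho_sub_1 : rho p q - 1 = (p - q) / (q * (1 - p)).
Proof. unfold rho; field; lra. Qed.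

Lemma rho_lt_1 : p < q -> rho p q < 1.
Proof.
  intros Hpq.
  enough ((p - q) / (q * (1 - p)) < 0) by (rewrite <- rho_sub_1 in *; lra).
  unfold Rdiv; apply Rmult_neg_pos; [lra|].
  apply Rinv_0_lt_compat; nra.
Qed.

Lemma rho_gt_1 : q < p -> 1 < rho p q.
Proof.
  intros Hqp.
  enough (0 < (p - q) / (q * (1 - p))) by (rewrite <- rho_sub_1 in *; lra).
  unfold Rdiv; apply Rmult_lt_0_compat; [lra|].
  apply Rinv_0_lt_compat; nra.
Qed.

End Rho.

(* For [a = p/q] and [x = rho^B] the two factors [a - 1] and [x - 1] have the same sign. *)
Lemma geometric_ratio_le_1 (a x : R) :
  (0 <= a <= 1 /\ 0 <= x < 1) \/ (1 <= a /\ 1 < x) ->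
  (1 - x) / (1 - a * x) <= 1.
Proof.
  intros [[Ha Hx] | [Ha Hx]].
  - apply Rdiv_le_1_pos; nra.
  - apply Rdiv_le_1_neg; nra.
Qed.

Lemma geometric_branch_le (p q : R) (B : nat) :
  0 < p < 1 -> 0 < q <= 1 -> q <> p -> (0 < B)%nat ->
  q * (p / q * (1 - rho p q ^ B) / (1 - p / q * rho p q ^ B)) <= p.
Proof.
  intros Hp Hq Hqp HB.
  replace (q * (p / q * (1 - rho p q ^ B) / (1 - p / q * rho p q ^ B)))
    with (p * ((1 - rho p q ^ B) / (1 - p / q * rho p q ^ B))).
  2: { unfold Rdiv; rewrite <- !Rmult_assoc, (Rmult_comm q p), (Rmult_assoc p q),
         Rinv_r, Rmult_1_r by lra; reflexivity. }
  apply Rmult_le_1_r; [lra|].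
  apply geometric_ratio_le_1.
  destruct (Rlt_or_le p q) as [Hpq | Hqp'].
  - left; split.
    + split; [apply Rlt_le, Rdiv_lt_0_compat; lra|].
      apply Rdiv_le_1_pos; lra.
    + apply pow_lt_1_compat; [split; [apply rho_ge_0 | apply rho_lt_1] |]; lra || lia.
  - right; split.
    + apply (Rmult_le_reg_r q); [lra|].
      unfold Rdiv; rewrite Rmult_assoc, Rinv_l by lra; lra.
    + apply Rlt_pow_R1; [apply rho_gt_1 | ]; lra || lia.
Qed.

Lemma f_B_le (p : R) (B : nat) (q : R) :
  0 < p < 1 -> (1 <= B)%nat -> 0 <= q <= 1 -> f_B p B q <= p.
Proof.
  intros Hp HB Hq. unfold f_B.
  destruct (Req_EM_T q 0) as [_ | Hq0]; [lra|].
  unfold r_B.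
  destruct (Nat.eqb B 1).
  - replace (q * (p / (p + q - p * q))) with (p * (q / (p + q - p * q))) by (field; nra).
    apply Rmult_le_1_r; [lra|].
    apply Rdiv_le_1_pos; nra.
  - destruct (Req_EM_T q p) as [-> | Hqp].
    + assert (HB1 : 1 <= INR B) by (apply (le_INR 1); lia).
      apply Rmult_le_1_r; [lra|].
      apply Rdiv_le_1_pos; lra.
    + apply geometric_branch_le; lra || lia.
Qed.

Lemma f_B_1 (p : R) (B : nat) : 0 < p < 1 -> (1 <= B)%nat -> f_B p B 1 = p.
Proof.
  intros Hp HB. unfold f_B, r_B.
  destruct (Req_EM_T 1 0); [lra|].
  destruct (Nat.eqb B 1); [field; lra|].
  destruct (Req_EM_T 1 p); [lra|].
  assert (Hrho : rho p 1 = 0) by (unfold rho; field; lra).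
  rewrite Hrho, pow_i by lia.
  field.
Qed.

Lemma TH_le_compat_l (lam lam_max p : R) (B : nat) (q q' qt : R) :
  f_B p B q <= f_B p B q' -> TH lam lam_max p B q qt <= TH lam lam_max p B q' qt.
Proof.
  intros Hf; unfold TH.
  apply Rmult_le_compat_r; [left; apply exp_pos | exact Hf].
Qed.

Lemma TH_le_reg_l (lam lam_max p : R) (B : nat) (q q' qt : R) :
  TH lam lam_max p B q qt <= TH lam lam_max p B q' qt -> f_B p B q <= f_B p B q'.
Proof.
  unfold TH; intros HTH.
  exact (Rmult_le_reg_r _ _ _ (exp_pos _) HTH).
Qed.

Theorem theorem4 (lam lam_max p : R) (B : nat) :
  0 < lam -> 0 < lam_max -> 0 < p < 1 -> (1 <= B)%nat ->
  SNE lam lam_max p B 1 /\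
  (forall qs, SNE lam lam_max p B qs ->
     TH lam lam_max p B qs qs = p * exp (- (p * lam / lam_max)) /\
     lam * TH lam lam_max p B qs qs = lam * p * exp (- (p * lam / lam_max))).
Proof.
  intros Hlam Hlam_max Hp HB.
  split.
  - split; [lra|].
    intros q Hq; apply TH_le_compat_l.
    rewrite f_B_1 by assumption.
    now apply f_B_le.
  - intros qs [Hqs Hbest].
    assert (Hf : f_B p B qs = p).
    { apply Rle_antisym; [now apply f_B_le|].
      rewrite <- (f_B_1 p B) at 1 by assumption.
      apply (TH_le_reg_l lam lam_max p B 1 qs qs), Hbest; lra. }
    unfold TH; rewrite Hf.
    replace (lam * p / lam_max) with (p * lam / lam_max) by (field; lra).
    split; ring.
Qed.
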